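(* The wall $W$ has a $2$-queue layout (with respect to a linear order of $V(W)$) such that for all edges $pq$ and $pr$ with $p\prec q\prec r$ or $r\prec q\prec p$, the edges $pq$ and $pr$ are in distinct queues.
   Context: The wall is the infinite graph $W$ with vertex set $\mathbb{Z}^2$ and edge set $\{(x,y)(x+1,y): x,y\in\mathbb{Z}\}\cup\{(x,y)(x,y+1): x,y\in\mathbb{Z},\ x+y\text{ even}\}$. A $k$-queue layout of a graph consists of a linear order $\preceq$ of its vertex set and a partition of its edge set into $k$ parts (queues) such that no two edges in the same queue nest, i.e. there are no edges $ab$ and $cd$ in the same queue with $a\prec c\prec d\prec b$. *)

From Stdlib Require Import ZArith Arith.
Open Scope Z_scope.

Definition vtx := (Z * Z)%type.

Definition wall_horiz (u v : vtx) : Prop :=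
  fst v = fst u + 1 /\ snd v = snd u.

Definition wall_vert (u v : vtx) : Prop :=
  fst v = fst u /\ snd v = snd u + 1 /\ Z.Even (fst u + snd u).

Definition wall_adj (u v : vtx) : Prop :=
  wall_horiz u v \/ wall_horiz v u \/ wall_vert u v \/ wall_vert v u.

Definition strict_linear_order {V : Type} (lt : V -> V -> Prop) : Prop :=
  (forall x, ~ lt x x) /\
  (forall x y z, lt x y -> lt y z -> lt x z) /\
  (forall x y, x <> y -> lt x y \/ lt y x).

(* A k-queue layout of the graph (V, adj) w.r.t. the linear order lt:
   q assigns to each edge uv (viewed as unordered: q u v = q v u) a queue
   index in {0,..,k-1}; no two edges in the same queue nest. *)
Definition queue_layout {V : Type} (adj : V -> V -> Prop) (k : nat)
  (lt : V -> V -> Prop) (q : V -> V -> nat) : Prop :=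
  strict_linear_order lt /\
  (forall u v, adj u v -> (q u v < k)%nat /\ q u v = q v u) /\
  (forall a b c d, adj a b -> adj c d -> lt a c -> lt c d -> lt d b ->
     q a b <> q c d).

(* Order the wall row by row, and within a row from left to right; put the
   horizontal edges in one queue and the vertical edges in the other.  A
   horizontal edge joins consecutive vertices, so nothing can nest inside it.
   Vertical edges all have length one row, so two of them nest only if the
   inner one starts to the right of and ends to the left of the outer one,
   which is impossible for vertical edges.  Finally, every vertex has two
   horizontal neighbours, lying on opposite sides of it, and (by the parity
   condition) exactly one vertical neighbour. *)

From Stdlib Require Import ZArith Lia.

Definition row_major_lt (u v : vtx) : Prop :=
  snd u < snd v \/ (snd u = snd v /\ fst u < fst v).

Definition edge_queue (u v : vtx) : nat :=
  if Z.eq_dec (snd u) (snd v) then 0%nat else 1%nat.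

Ltac unfold_wall :=
  unfold wall_adj, wall_horiz, wall_vert, row_major_lt, Z.Even in *.

Lemma row_major_lt_strict_linear : strict_linear_order row_major_lt.
Proof.
  unfold strict_linear_order, row_major_lt.
  split; [|split].
  - intros [x y]; cbn [fst snd]; lia.
  - intros [x1 y1] [x2 y2] [x3 y3]; cbn [fst snd]; lia.
  - intros [x1 y1] [x2 y2] Hne; cbn [fst snd].
    destruct (Z.eq_dec x1 x2), (Z.eq_dec y1 y2); subst; [congruence | lia ..].
Qed.

Lemma edge_queue_sym (u v : vtx) : edge_queue u v = edge_queue v u.
Proof.
  unfold edge_queue.
  destruct (Z.eq_dec (snd u) (snd v)), (Z.eq_dec (snd v) (snd u)); congruence.
Qed.

Lemma edge_queue_lt_2 (u v : vtx) : (edge_queue u v < 2)%nat.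
Proof. unfold edge_queue; destruct Z.eq_dec; lia. Qed.

Lemma wall_adj_forward (u v : vtx) :
  wall_adj u v -> row_major_lt u v -> wall_horiz u v \/ wall_vert u v.
Proof.
  destruct u as [x y], v as [x' y']; unfold_wall; cbn [fst snd].
  intros [H|[H|[H|H]]] Hlt; try tauto; exfalso.
  - lia.
  - destruct H as [? [? _]]; lia.
Qed.

Lemma wall_horiz_consecutive (a b c : vtx) :
  wall_horiz a b -> row_major_lt a c -> row_major_lt c b -> False.
Proof.
  destruct a as [xa ya], b as [xb yb], c as [xc yc]; unfold_wall; cbn [fst snd]; lia.
Qed.

Lemma wall_vert_no_nest (a b c d : vtx) :
  wall_vert a b -> wall_vert c d ->
  row_major_lt a c -> row_major_lt c d -> row_major_lt d b -> False.
Proof.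
  destruct a as [xa ya], b as [xb yb], c as [xc yc], d as [xd yd].
  unfold_wall; cbn [fst snd]; intros [? [? _]] [? [? _]]; lia.
Qed.

Lemma wall_vert_neighbour_unique (p q r : vtx) :
  wall_adj p q -> wall_adj p r -> snd p <> snd q -> snd p <> snd r -> q = r.
Proof.
  destruct p as [xp yp], q as [xq yq], r as [xr yr]; unfold_wall; cbn [fst snd].
  intros Hq Hr Hpq Hpr.
  destruct Hq as [[? ?]|[[? ?]|[[? [? [k ?]]]|[? [? [k ?]]]]]]; try lia;
  destruct Hr as [[? ?]|[[? ?]|[[? [? [l ?]]]|[? [? [l ?]]]]]]; try lia;
  f_equal; lia.
Qed.

Lemma wall_horiz_neighbours_opposite (p q r : vtx) :
  wall_adj p q -> wall_adj p r -> snd p = snd q -> snd p = snd r -> q <> r ->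
  (row_major_lt q p /\ row_major_lt p r) \/ (row_major_lt r p /\ row_major_lt p q).
Proof.
  destruct p as [xp yp], q as [xq yq], r as [xr yr]; unfold_wall; cbn [fst snd].
  intros Hq Hr Hpq Hpr Hne.
  destruct Hq as [[? ?]|[[? ?]|[[? [? _]]|[? [? _]]]]]; try lia;
  destruct Hr as [[? ?]|[[? ?]|[[? [? _]]|[? [? _]]]]]; try lia;
  first [exfalso; apply Hne; f_equal; lia | lia].
Qed.

Lemma edge_queue_no_nest (a b c d : vtx) :
  wall_adj a b -> wall_adj c d ->
  row_major_lt a c -> row_major_lt c d -> row_major_lt d b ->
  edge_queue a b <> edge_queue c d.
Proof.
  intros Hab Hcd Hac Hcd' Hdb Heq.
  destruct row_major_lt_strict_linear as [_ [Htrans _]].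
  assert (Hcb : row_major_lt c b) by exact (Htrans _ _ _ Hcd' Hdb).
  destruct (wall_adj_forward a b Hab (Htrans _ _ _ Hac Hcb)) as [Hh|Hv].
  - exact (wall_horiz_consecutive a b c Hh Hac Hcb).
  - destruct (wall_adj_forward c d Hcd Hcd') as [Hh'|Hv'].
    + destruct Hv as [_ [Hy _]], Hh' as [_ Hy'].
      unfold edge_queue in Heq.
      destruct Z.eq_dec, Z.eq_dec; congruence || lia.
    + exact (wall_vert_no_nest a b c d Hv Hv' Hac Hcd' Hdb).
Qed.

Lemma edge_queue_separates_neighbours (p q r : vtx) :
  wall_adj p q -> wall_adj p r ->
  (row_major_lt p q /\ row_major_lt q r) \/ (row_major_lt r q /\ row_major_lt q p) ->
  edge_queue p q <> edge_queue p r.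
Proof.
  intros Hq Hr Hbetween Heq.
  assert (Hne : q <> r).
  { intros <-; unfold row_major_lt in *; lia. }
  unfold edge_queue in Heq.
  destruct (Z.eq_dec (snd p) (snd q)) as [Hpq|Hpq],
           (Z.eq_dec (snd p) (snd r)) as [Hpr|Hpr]; try discriminate.
  - destruct (wall_horiz_neighbours_opposite p q r Hq Hr Hpq Hpr Hne);
      unfold row_major_lt in *; lia.
  - exact (Hne (wall_vert_neighbour_unique p q r Hq Hr Hpq Hpr)).
Qed.

Theorem lemma12 :
  exists (lt : vtx -> vtx -> Prop) (qa : vtx -> vtx -> nat),
    queue_layout wall_adj 2 lt qa /\
    (forall p q r : vtx, wall_adj p q -> wall_adj p r ->
       ((lt p q /\ lt q r) \/ (lt r q /\ lt q p)) ->
       qa p q <> qa p r).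
Proof.
  exists row_major_lt, edge_queue.
  split; [split; [|split]|].
  - exact row_major_lt_strict_linear.
  - split; [apply edge_queue_lt_2 | apply edge_queue_sym].
  - exact edge_queue_no_nest.
  - exact edge_queue_separates_neighbours.
Qed.
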